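(* Let $n\ge 1$ be an integer and let $f:\mathbb{R}\to\mathbb{R}$ be a discontinuous additive function whose graph $G(f)$ is connected. Then $F(x)=x^{n-1}f(x)$ is a discontinuous $n$-monomial function whose graph $G(F)=\{(x,F(x)):x\in\mathbb{R}\}$ is connected.
   Context: For $h\in\mathbb{R}$, $\Delta_h f(x)=f(x+h)-f(x)$ and $\Delta_h^{n}=\Delta_h\circ\Delta_h^{n-1}$. A function $f:\mathbb{R}\to\mathbb{R}$ is an $n$-monomial function if $\frac{1}{n!}\Delta_h^n f(x)=f(h)$ for all $x,h\in\mathbb{R}$. An additive function satisfies $f(x+y)=f(x)+f(y)$ for all $x,y$. The graph of a function $g$ is $G(g)=\{(x,g(x))\}\subseteq\mathbb{R}^2$. *)

From Stdlib Require Import Reals Factorial.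
Open Scope R_scope.

Definition Delta (h : R) (f : R -> R) : R -> R := fun x => f (x + h) - f x.

Fixpoint Delta_n (n : nat) (h : R) (f : R -> R) : R -> R :=
  match n with
  | O => f
  | S m => Delta h (Delta_n m h f)
  end.

Definition is_monomial (n : nat) (f : R -> R) : Prop :=
  forall x h : R, / INR (fact n) * Delta_n n h f x = f h.

Definition additive (f : R -> R) : Prop :=
  forall x y : R, f (x + y) = f x + f y.

Definition dist2 (p q : R * R) : R :=
  sqrt ((fst p - fst q) ^ 2 + (snd p - snd q) ^ 2).

Definition open2 (U : R * R -> Prop) : Prop :=
  forall p, U p -> exists eps : R, 0 < eps /\ forall q, dist2 p q < eps -> U q.

Definition connected2 (S : R * R -> Prop) : Prop :=
  ~ exists U V : R * R -> Prop,
      open2 U /\ open2 V /\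
      (forall p, S p -> U p \/ V p) /\
      (forall p, S p -> U p -> V p -> False) /\
      (exists p, S p /\ U p) /\ (exists p, S p /\ V p).

Definition graph (g : R -> R) : R * R -> Prop := fun p => snd p = g (fst p).

(* Three independent facts.  (i) If [v (y + h) = v y + beta] and [Delta_h^d u] is the
   constant [c], a discrete Leibniz rule gives [Delta_h^(d+1) (u v) = (d+1) beta c];
   starting from [x^0] and [v = id] this yields [Delta_h^k x^k = k! h^k], and then
   with [v = f] (additive, so [beta = f h]) it yields [Delta_h^n F = n! h^(n-1) f h
   = n! F h].  (ii) [f = F / x^(n-1)] would be continuous at [1], and an additive
   function continuous at one point is continuous everywhere.  (iii) The continuous
   map [(x, y) |-> (x, x^(n-1) y)] sends [G(f)] onto [G(F)], and continuous images of
   connected sets are connected. *)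
From Stdlib Require Import Reals Lra Lia Factorial.
From Coquelicot Require Import Hierarchy Continuity.
(* Imported last, so that [Delta] is the difference operator and not [R_sqrt.Delta]. *)
Open Scope R_scope.

Lemma Delta_n_succ_inner m h u x :
  Delta_n (S m) h u x = Delta_n m h (Delta h u) x.
Proof.
  revert x; induction m as [|m IHm]; intro x; [reflexivity|].
  change (Delta h (Delta_n (S m) h u) x =
          Delta h (Delta_n m h (Delta h u)) x).
  unfold Delta at 1 3. rewrite !IHm. reflexivity.
Qed.

Lemma Delta_n_ext m h u1 u2 x :
  (forall y, u1 y = u2 y) -> Delta_n m h u1 x = Delta_n m h u2 x.
Proof.
  intro Hu; revert x; induction m as [|m IHm]; intro x; simpl; [apply Hu|].
  unfold Delta. rewrite !IHm. reflexivity.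
Qed.

Lemma Delta_n_plus m h u w x :
  Delta_n m h (fun y => u y + w y) x = Delta_n m h u x + Delta_n m h w x.
Proof.
  revert x; induction m as [|m IHm]; intro x; simpl; [reflexivity|].
  unfold Delta. rewrite !IHm. ring.
Qed.

Lemma Delta_n_scal m h a u x :
  Delta_n m h (fun y => a * u y) x = a * Delta_n m h u x.
Proof.
  revert x; induction m as [|m IHm]; intro x; simpl; [reflexivity|].
  unfold Delta. rewrite !IHm. ring.
Qed.

Lemma Delta_n_shift m h u x :
  Delta_n m h (fun y => u (y + h)) x = Delta_n m h u (x + h).
Proof.
  revert x; induction m as [|m IHm]; intro x; simpl; [reflexivity|].
  unfold Delta. rewrite !IHm. reflexivity.
Qed.

Section AffineIncrement.
Variables (h beta : R) (v : R -> R).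
Hypothesis v_step : forall y, v (y + h) = v y + beta.

Lemma Delta_n_mul_affine m u y :
  Delta_n (S m) h (fun z => u z * v z) y =
  beta * Delta_n m h u (y + h) + Delta_n m h (fun z => Delta h u z * v z) y.
Proof.
  rewrite Delta_n_succ_inner.
  rewrite (Delta_n_ext m h _ (fun z => beta * u (z + h) + Delta h u z * v z)).
  - rewrite Delta_n_plus, Delta_n_scal, Delta_n_shift. reflexivity.
  - intro z. unfold Delta. rewrite v_step. ring.
Qed.

Lemma Delta_n_mul_affine_const d : forall u c,
  (forall y, Delta_n d h u y = c) ->
  forall y, Delta_n (S d) h (fun z => u z * v z) y = INR (S d) * beta * c.
Proof.
  induction d as [|d IHd]; intros u c Hu y; rewrite Delta_n_mul_affine.
  - simpl in *. unfold Delta. rewrite !Hu. ring.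
  - rewrite Hu, (IHd (Delta h u) c).
    + rewrite (S_INR (S d)). ring.
    + intro z. rewrite <- Delta_n_succ_inner. apply Hu.
Qed.

End AffineIncrement.

Lemma Delta_n_pow h k y : Delta_n k h (fun z => z ^ k) y = INR (fact k) * h ^ k.
Proof.
  revert y; induction k as [|k IHk]; intro y; [simpl; ring|].
  rewrite (Delta_n_ext _ _ _ (fun z => z ^ k * z)) by (intro; simpl; ring).
  rewrite (Delta_n_mul_affine_const h h (fun z => z)) with (c := INR (fact k) * h ^ k)
    by (reflexivity || apply IHk).
  change (fact (S k)) with (S k * fact k)%nat. rewrite mult_INR. simpl. ring.
Qed.

Lemma additive_0 f : additive f -> f 0 = 0.
Proof. intro Hf. pose proof (Hf 0 0) as H. rewrite Rplus_0_r in H. lra. Qed.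

Lemma additive_pow_mul_monomial k f :
  additive f -> is_monomial (S k) (fun x => x ^ k * f x).
Proof.
  intros Hf x h.
  rewrite (Delta_n_mul_affine_const h (f h) f (fun y => Hf y h) k _ _ (Delta_n_pow h k)).
  change (fact (S k)) with (S k * fact k)%nat. rewrite mult_INR.
  pose proof (INR_fact_neq_0 k). pose proof (not_0_INR (S k) (Nat.neq_succ_0 k)).
  field. auto.
Qed.

Lemma additive_continuity_pt f a :
  additive f -> continuity_pt f a -> continuity f.
Proof.
  intros Hf Ha y.
  apply (continuity_pt_ext (fun z => f (z + (a - y)) - f (a - y))).
  { intro z. rewrite Hf. ring. }
  apply continuity_pt_minus; [|apply continuity_pt_const; intros ? ?; reflexivity].
  apply (continuity_pt_comp (fun z => z + (a - y)) f).
  - apply continuity_pt_plus; [apply derivable_continuous_pt, derivable_pt_id|].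
    apply continuity_pt_const. intros ? ?. reflexivity.
  - replace (y + (a - y)) with a by ring. exact Ha.
Qed.

(* Division by [0 ^ k] returns [0], which agrees with [f 0 = 0]. *)
Lemma pow_mul_continuity_pt_1 k f :
  f 0 = 0 -> continuity (fun x => x ^ k * f x) -> continuity_pt f 1.
Proof.
  intros f0 HF.
  apply (continuity_pt_ext (mult_fct (fun x => x ^ k * f x) (inv_fct (fun x => x ^ k)))).
  - intro x. unfold mult_fct, inv_fct.
    destruct (Req_dec x 0) as [->|Hx].
    + rewrite f0. ring.
    + field. apply pow_nonzero, Hx.
  - apply continuity_pt_mult; [apply HF|]. apply continuity_pt_inv.
    + apply derivable_continuous_pt, derivable_pt_pow.
    + rewrite pow1. lra.
Qed.

Lemma dist2_fst p q : Rabs (fst p - fst q) <= dist2 p q.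
Proof.
  unfold dist2. rewrite <- (sqrt_pow2 (Rabs (fst p - fst q))) by apply Rabs_pos.
  rewrite pow2_abs. apply sqrt_le_1_alt. pose proof (pow2_ge_0 (snd p - snd q)); lra.
Qed.

Lemma dist2_snd p q : Rabs (snd p - snd q) <= dist2 p q.
Proof.
  unfold dist2. rewrite <- (sqrt_pow2 (Rabs (snd p - snd q))) by apply Rabs_pos.
  rewrite pow2_abs. apply sqrt_le_1_alt. pose proof (pow2_ge_0 (fst p - fst q)); lra.
Qed.

Lemma dist2_le p q : dist2 p q <= Rabs (fst p - fst q) + Rabs (snd p - snd q).
Proof.
  unfold dist2.
  pose proof (Rabs_pos (fst p - fst q)). pose proof (Rabs_pos (snd p - snd q)).
  rewrite <- (sqrt_pow2 (Rabs (fst p - fst q) + Rabs (snd p - snd q))) by lra.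
  apply sqrt_le_1_alt.
  pose proof (pow2_abs (fst p - fst q)). pose proof (pow2_abs (snd p - snd q)).
  nra.
Qed.

Lemma ball_dist2 p q (d : R) : dist2 p q < d -> ball p d q.
Proof.
  intro H. pose proof (dist2_fst p q). pose proof (dist2_snd p q).
  split; [change (Rabs (fst q - fst p) < d) | change (Rabs (snd q - snd p) < d)];
    rewrite Rabs_minus_sym; lra.
Qed.

Lemma open2_preimage (g1 g2 : R * R -> R) U :
  (forall p, continuous g1 p) -> (forall p, continuous g2 p) ->
  open2 U -> open2 (fun p => U (g1 p, g2 p)).
Proof.
  intros C1 C2 oU p Up. destruct (oU _ Up) as [e [He Hq]].
  pose (e2 := mkposreal (e / 2) ltac:(lra)).
  destruct (proj1 (filterlim_locally g1 (g1 p)) (C1 p) e2) as [d1 H1].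
  destruct (proj1 (filterlim_locally g2 (g2 p)) (C2 p) e2) as [d2 H2].
  exists (Rmin d1 d2). split; [apply Rmin_pos; apply cond_pos|].
  intros q Hpq. apply Hq.
  pose proof (Rmin_l d1 d2). pose proof (Rmin_r d1 d2).
  assert (B1 : Rabs (g1 q - g1 p) < e / 2) by (apply H1, ball_dist2; lra).
  assert (B2 : Rabs (g2 q - g2 p) < e / 2) by (apply H2, ball_dist2; lra).
  eapply Rle_lt_trans; [apply dist2_le|]. simpl.
  rewrite (Rabs_minus_sym (g1 p)), (Rabs_minus_sym (g2 p)). lra.
Qed.

Lemma continuous_fst_pow_mul_snd k (p : R * R) :
  continuous (fun q : R * R => fst q ^ k * snd q) p.
Proof.
  destruct p as [a b].
  apply (continuous_mult (K := R_AbsRing) (fun q : R * R => fst q ^ k)); [|apply continuous_snd].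
  induction k as [|k IHk].
  - apply continuous_const.
  - apply (continuous_mult (K := R_AbsRing) fst); [apply continuous_fst | exact IHk].
Qed.

Lemma connected2_image (g : R * R -> R * R) S T :
  (forall U, open2 U -> open2 (fun p => U (g p))) ->
  (forall p, S p -> T (g p)) ->
  (forall q, T q -> exists p, S p /\ g p = q) ->
  connected2 S -> connected2 T.
Proof.
  intros Hg ST TS HS [U [V [oU [oV [cov [dis [[p [Tp Up]] [q [Tq Vq]]]]]]]]].
  apply HS. exists (fun p => U (g p)), (fun p => V (g p)).
  destruct (TS p Tp) as [p' [Sp' <-]]. destruct (TS q Tq) as [q' [Sq' <-]].
  split; [auto|]. split; [auto|].
  split; [intros r Sr; apply cov, ST, Sr|].
  split; [intros r Sr; apply dis, ST, Sr|].
  split; [exists p' | exists q']; auto.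
Qed.

Lemma connected2_graph_pow_mul k f :
  connected2 (graph f) -> connected2 (graph (fun x => x ^ k * f x)).
Proof.
  apply (connected2_image (fun p => (fst p, fst p ^ k * snd p))).
  - intros U oU. apply open2_preimage; auto.
    + intro p. apply continuous_fst.
    + apply continuous_fst_pow_mul_snd.
  - intros [a b] Hab. unfold graph in *. simpl in *. rewrite Hab. reflexivity.
  - intros [a b] Hab. exists (a, f a). split; [reflexivity|].
    unfold graph in Hab. simpl in *. rewrite Hab. reflexivity.
Qed.

Theorem mainTheorem3 (n : nat) (f : R -> R) :
  (1 <= n)%nat ->
  additive f ->
  ~ continuity f ->
  connected2 (graph f) ->
  let F := fun x => x ^ (n - 1) * f x in
  is_monomial n F /\ ~ continuity F /\ connected2 (graph F).
Proof.
  intros Hn Hf Hnc Hconn.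
  destruct n as [|k]; [lia|].
  replace (S k - 1)%nat with k by lia. intro F.
  split; [|split].
  - apply additive_pow_mul_monomial, Hf.
  - intro HF. apply Hnc, (additive_continuity_pt f 1 Hf).
    exact (pow_mul_continuity_pt_1 k f (additive_0 f Hf) HF).
  - apply connected2_graph_pow_mul, Hconn.
Qed.
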